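(* Let $g_1,g_2\in\mathcal{O}_3=\mathbb{R}\{t,x_1,x_2\}$ vanish at the origin, suppose $V(g_1,g_2)$ is a curve having an algebraically isolated singularity at the origin and $\dim_{\mathbb{R}}\mathcal{O}_3/\langle t,g_1,g_2\rangle<\infty$. Put $g_i'(t,x)=g_i(t^2,x)$, $i=1,2$. Then $\dim_{\mathbb{R}}\mathcal{O}_3/\langle t,g_1',g_2'\rangle<\infty$ and $V(g_1',g_2')$ is a curve having an algebraically isolated singularity at the origin.
   Context: $\mathcal{O}_3$ is the ring of real analytic germs at the origin in $(t,x_1,x_2)$. For $w_1,\dots,w_m\in\mathcal{O}_3$ vanishing at $\mathbf 0$, let $W$ be the ideal generated by $w_1,\dots,w_m$ and all $2\times2$ minors of the Jacobian matrix of $(w_1,\ldots,w_m)$ with respect to $(t,x_1,x_2)$; $V(w_1,\dots,w_m)$ is a curve having an algebraically isolated singularity at the origin if $W$ is proper and $\dim_{\mathbb{R}}\mathcal{O}_3/W<\infty$. *)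

(* Real analytic germs at 0 in (t,x1,x2) are modelled, as usual,
   by convergent real power series in three variables (O_3 = R{t,x1,x2}).
   A power series is its coefficient function: f i j k = coeff of t^i x1^j x2^k. *)
From Stdlib Require Import Reals List Arith.
Open Scope R_scope.

Definition ps := nat -> nat -> nat -> R.

(* convergence of the series on some polydisc (Abel's lemma: bounded coefficients
   times r^(i+j+k) for some r>0) *)
Definition convergent (f : ps) : Prop :=
  exists r M : R, 0 < r /\ forall i j k, Rabs (f i j k) * r ^ (i + j + k) <= M.

Definition ps_zero : ps := fun _ _ _ => 0.
Definition ps_one : ps := fun i j k =>
  match i, j, k with O, O, O => 1 | _, _, _ => 0 end.
Definition ps_t : ps := fun i j k =>
  match i, j, k with 1%nat, O, O => 1 | _, _, _ => 0 end.
Definition ps_add (f g : ps) : ps := fun i j k => f i j k + g i j k.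
Definition ps_opp (f : ps) : ps := fun i j k => - f i j k.
Definition ps_scale (c : R) (f : ps) : ps := fun i j k => c * f i j k.

Fixpoint sumR (n : nat) (u : nat -> R) : R :=
  match n with O => 0 | S n' => sumR n' u + u n' end.

Definition ps_mul (f g : ps) : ps := fun i j k =>
  sumR (S i) (fun a => sumR (S j) (fun b => sumR (S k) (fun c =>
    f a b c * g (i - a)%nat (j - b)%nat (k - c)%nat))).

(* partial derivatives: variable 0 = t, 1 = x1, 2 = x2 *)
Definition ps_deriv (v : nat) (f : ps) : ps := fun i j k =>
  match v with
  | O => INR (S i) * f (S i) j k
  | 1%nat => INR (S j) * f i (S j) k
  | _ => INR (S k) * f i j (S k)
  end.

Definition vanishes_at_0 (f : ps) : Prop := f O O O = 0.

Definition subst_t_sq (g : ps) : ps := fun i j k =>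
  if Nat.even i then g (Nat.div2 i) j k else 0.

Fixpoint lin_comb (cs gs : list ps) : ps :=
  match cs, gs with
  | c :: cs', g :: gs' => ps_add (ps_mul c g) (lin_comb cs' gs')
  | _, _ => ps_zero
  end.

Definition in_ideal (gs : list ps) (f : ps) : Prop :=
  exists cs : list ps, length cs = length gs /\ Forall convergent cs /\
    f = lin_comb cs gs.

Definition ideal_proper (gs : list ps) : Prop := ~ in_ideal gs ps_one.

Fixpoint real_comb (cs : list R) (es : list ps) : ps :=
  match cs, es with
  | c :: cs', e :: es' => ps_add (ps_scale c e) (real_comb cs' es')
  | _, _ => ps_zero
  end.

Definition finite_codim (gs : list ps) : Prop :=
  exists es : list ps, Forall convergent es /\
    forall f, convergent f ->
      exists cs : list R, length cs = length es /\
        in_ideal gs (ps_add f (ps_opp (real_comb cs es))).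

Definition minor2 (w w' : ps) (a b : nat) : ps :=
  ps_add (ps_mul (ps_deriv a w) (ps_deriv b w'))
         (ps_opp (ps_mul (ps_deriv b w) (ps_deriv a w'))).

Definition var_pairs : list (nat * nat) := (0%nat, 1%nat) :: (0%nat, 2%nat) :: (1%nat, 2%nat) :: nil.

Fixpoint all_minors (ws : list ps) : list ps :=
  match ws with
  | nil => nil
  | w :: ws' =>
      flat_map (fun w' => map (fun p => minor2 w w' (fst p) (snd p)) var_pairs) ws'
      ++ all_minors ws'
  end.

Definition W_gens (ws : list ps) : list ps := ws ++ all_minors ws.

Definition curve_alg_isolated_sing (ws : list ps) : Prop :=
  Forall convergent ws /\ Forall vanishes_at_0 ws /\
  ideal_proper (W_gens ws) /\ finite_codim (W_gens ws).

(* Write φ for the substitution t ↦ t^2. Every series splits uniquely as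
   f = φ(f0) + t φ(f1). Since ∂_t(φ g) = 2t φ(∂_t g) while φ commutes with ∂_{x1}
   and ∂_{x2}, the minors of (φ g1, φ g2) are 2t φ(m01), 2t φ(m02) and φ(m12).
   Hence t φ(W) ⊆ W' and φ<t,g1,g2> ⊆ t^2 φ(O3) + W'; reducing f0 modulo
   <t,g1,g2>, then the t^2-remainder and f1 modulo W, turns finite spanning sets
   of O3/W and O3/<t,g1,g2> into one of O3/W' (and φ<t,g1,g2> ⊆ <t,φ g1,φ g2>
   does the same for O3/<t,φ g1,φ g2>). Conversely every generator of W' is φ(h)
   or t φ(h) with h in W, so the even part of a representation of 1 in W' is
   a representation of 1 in W. *)

Set Warnings "-notation-overridden,-ambiguous-paths".
From Stdlib Require Import Reals List FunctionalExtensionality Lia Lra.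
From mathcomp Require all_boot all_algebra Rstruct zify.

Lemma ps_ext (f g : ps) : (forall i j k, f i j k = g i j k) -> f = g.
Proof.
intros H; do 3 (apply functional_extensionality; intro); apply H.
Qed.

(* A coefficient of index below n of a Cauchy product only involves coefficients
   below n, so ring identities transfer from {poly {poly {poly R}}} by truncation. *)
Module PolyModel.
Import all_boot all_algebra Rstruct zify.
Import GRing.Theory.
Local Open Scope ring_scope.

Definition coef3 (P : {poly {poly {poly R}}}) : ps := fun i j k => P`_i`_j`_k.

Definition approx n (f : ps) P := forall a b c, (a < n)%N -> (b < n)%N -> (c < n)%N ->
  f a b c = coef3 P a b c.

Definition trunc n (f : ps) : {poly {poly {poly R}}} :=
  \poly_(i < n) \poly_(j < n) \poly_(k < n) f i j k.

Lemma sumR_big n (u : nat -> R) : sumR n u = \sum_(a < n) u a.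
Proof. by elim: n => [|n IH]; rewrite ?big_ord0 // big_ord_recr /= IH. Qed.

Lemma sumR_eq_lt n (u v : nat -> R) :
  (forall a, (a < n)%N -> u a = v a) -> sumR n u = sumR n v.
Proof. by move=> uv; rewrite !sumR_big; apply: eq_bigr => a _; apply: uv. Qed.

Lemma coef3M P Q : coef3 (P * Q) = ps_mul (coef3 P) (coef3 Q).
Proof.
apply: ps_ext => i j k.
rewrite /coef3 /ps_mul coefM sumR_big coef_sum coef_sum.
apply: eq_bigr => a _; rewrite coefM sumR_big coef_sum.
by apply: eq_bigr => b _; rewrite coefM sumR_big.
Qed.

Lemma approx_trunc n f : approx n f (trunc n f).
Proof. by move=> a b c Ha Hb Hc; rewrite /coef3 coef_poly Ha coef_poly Hb coef_poly Hc. Qed.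

Lemma approx_mul n f g P Q : approx n f P -> approx n g Q -> approx n (ps_mul f g) (P * Q).
Proof.
move=> Hf Hg a b c Ha Hb Hc; rewrite coef3M /ps_mul.
apply: sumR_eq_lt => x Hx; apply: sumR_eq_lt => y Hy; apply: sumR_eq_lt => z Hz.
by rewrite Hf ?Hg //; lia.
Qed.

Lemma approx_add n f g P Q : approx n f P -> approx n g Q -> approx n (ps_add f g) (P + Q).
Proof. by move=> Hf Hg a b c Ha Hb Hc; rewrite /ps_add Hf // Hg // /coef3 !coefD. Qed.

Lemma approx_scale n c f P : approx n f P -> approx n (ps_scale c f) (c%:P%:P%:P * P).
Proof. by move=> Hf a b d Ha Hb Hd; rewrite /ps_scale Hf // /coef3 !coefCM. Qed.

Lemma approx_one n : approx n ps_one 1.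
Proof.
move=> a b c _ _ _; rewrite /coef3 coef1.
case: a => [|a] /=; last by rewrite !coef0.
rewrite coef1; case: b => [|b] /=; last by rewrite !coef0.
by rewrite coef1; case: c.
Qed.

Lemma approx_t n : approx n ps_t 'X.
Proof.
move=> a b c _ _ _; rewrite /coef3 coefX.
case: a => [|[|a]] /=; rewrite ?coef0 //.
rewrite coef1; case: b => [|b] /=; last by rewrite !coef0.
by rewrite coef1; case: c.
Qed.

Lemma approx_subst_t_sq n f P : approx n f P -> approx n (subst_t_sq f) (P \Po 'X^2).
Proof.
move=> Hf a b c Ha Hb Hc; rewrite /coef3 coef_comp_poly_Xn // /subst_t_sq.
have -> : Nat.even a = (2 %| a)%N.
  by rewrite dvdn2; elim: a {Ha} => // a IH; rewrite Nat.even_succ -Nat.negb_even IH.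
have -> : Nat.div2 a = (a %/ 2)%N.
  by rewrite divn2; elim/ltn_ind: a {Ha} => -[|[|a]] // IH; rewrite /= -IH.
case: (2 %| a)%N; last by rewrite !coef0.
by apply: Hf => //; exact: leq_ltn_trans (leq_div _ _) Ha.
Qed.

Lemma ps_eq_approx (f g : ps) : (forall n, exists P, approx n f P /\ approx n g P) -> f = g.
Proof.
move=> H; apply: ps_ext => i j k.
have [P [Hf Hg]] := H (i + j + k).+1.
by rewrite Hf ?Hg //; lia.
Qed.

Lemma ps_mul_comm f g : ps_mul f g = ps_mul g f.
Proof.
apply: ps_eq_approx => n; exists (trunc n f * trunc n g).
by rewrite [X in _ /\ approx _ _ X]mulrC; split; apply: approx_mul; apply: approx_trunc.
Qed.

Lemma ps_mul_assoc f g h : ps_mul f (ps_mul g h) = ps_mul (ps_mul f g) h.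
Proof.
apply: ps_eq_approx => n; exists (trunc n f * trunc n g * trunc n h).
split; last by do !apply: approx_mul; apply: approx_trunc.
by rewrite -mulrA; do !apply: approx_mul; apply: approx_trunc.
Qed.

Lemma ps_mul_1l f : ps_mul ps_one f = f.
Proof.
apply: ps_eq_approx => n; exists (1 * trunc n f).
split; first by apply: approx_mul; [apply: approx_one | apply: approx_trunc].
by rewrite mul1r; apply: approx_trunc.
Qed.

Lemma ps_mul_addl f g h : ps_mul (ps_add f g) h = ps_add (ps_mul f h) (ps_mul g h).
Proof.
apply: ps_eq_approx => n; exists ((trunc n f + trunc n g) * trunc n h).
split; first by apply: approx_mul; [apply: approx_add|]; apply: approx_trunc.
by rewrite mulrDl; apply: approx_add; apply: approx_mul; apply: approx_trunc.
Qed.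

Lemma ps_mul_scalel c f g : ps_mul (ps_scale c f) g = ps_scale c (ps_mul f g).
Proof.
apply: ps_eq_approx => n; exists (c%:P%:P%:P * trunc n f * trunc n g).
split; first by apply: approx_mul; [apply: approx_scale|]; apply: approx_trunc.
by rewrite -mulrA; apply: approx_scale; apply: approx_mul; apply: approx_trunc.
Qed.

Lemma subst_t_sq_mul f g :
  subst_t_sq (ps_mul f g) = ps_mul (subst_t_sq f) (subst_t_sq g).
Proof.
apply: ps_eq_approx => n; exists ((trunc n f * trunc n g) \Po 'X^2).
split; first by apply: approx_subst_t_sq; apply: approx_mul; apply: approx_trunc.
by rewrite comp_polyM; apply: approx_mul; apply: approx_subst_t_sq; apply: approx_trunc.
Qed.

Lemma subst_t_sq_t : subst_t_sq ps_t = ps_mul ps_t ps_t.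
Proof.
apply: ps_eq_approx => n; exists ('X \Po 'X^2).
split; first by apply: approx_subst_t_sq; apply: approx_t.
by rewrite comp_polyX expr2; apply: approx_mul; apply: approx_t.
Qed.

Lemma ps_mul_tE h i j k :
  ps_mul ps_t h i j k = match i with O => R0 | S i' => h i' j k end.
Proof.
set n := (i + j + k).+1.
have Hn : approx n (ps_mul ps_t h) ('X * trunc n h).
  by apply: approx_mul; [apply: approx_t | apply: approx_trunc].
rewrite Hn; try lia.
rewrite /coef3 coefXM; case: i @n Hn => [|i] n Hn /=; first by rewrite !coef0.
by rewrite -/(coef3 _ i j k) -approx_trunc //; lia.
Qed.

End PolyModel.

Import PolyModel.
Open Scope R_scope.

Lemma bound_le_radius (x r r' M : R) n :
  0 <= r' <= r -> Rabs x * r ^ n <= M -> Rabs x * r' ^ n <= M.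
Proof. intros Hr H; pose proof (pow_incr r' r n Hr); pose proof (Rabs_pos x); nra. Qed.

Lemma convergent_common_radius f g : convergent f -> convergent g ->
  exists r M N, 0 < r /\ 0 <= M /\ 0 <= N /\
    (forall i j k, Rabs (f i j k) * r ^ (i + j + k) <= M) /\
    (forall i j k, Rabs (g i j k) * r ^ (i + j + k) <= N).
Proof.
intros [r1 [M [Hr1 Hf]]] [r2 [N [Hr2 Hg]]].
assert (Hr : 0 < Rmin r1 r2) by (apply Rmin_pos; assumption).
exists (Rmin r1 r2), M, N; repeat split; auto.
- pose proof (Hf O O O); pose proof (Rabs_pos (f O O O)); simpl in *; lra.
- pose proof (Hg O O O); pose proof (Rabs_pos (g O O O)); simpl in *; lra.
- intros; apply (bound_le_radius _ r1); [split; [lra | apply Rmin_l] | apply Hf].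
- intros; apply (bound_le_radius _ r2); [split; [lra | apply Rmin_r] | apply Hg].
Qed.

Lemma convergent_zero : convergent ps_zero.
Proof. exists 1, 0; split; [lra|]; intros; unfold ps_zero; rewrite Rabs_R0; lra. Qed.

Lemma convergent_one : convergent ps_one.
Proof.
exists 1, 1; split; [lra|]; intros i j k; rewrite pow1, Rmult_1_r.
destruct i, j, k; simpl; rewrite ?Rabs_R1, ?Rabs_R0; lra.
Qed.

Lemma convergent_t : convergent ps_t.
Proof.
exists 1, 1; split; [lra|]; intros i j k; rewrite pow1, Rmult_1_r.
destruct i as [|[|i]], j, k; simpl; rewrite ?Rabs_R1, ?Rabs_R0; lra.
Qed.

Lemma convergent_scale c f : convergent f -> convergent (ps_scale c f).
Proof.
intros [r [M [Hr H]]]; exists r, (Rabs c * M); split; auto; intros i j k; unfold ps_scale.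
rewrite Rabs_mult, Rmult_assoc; apply Rmult_le_compat_l; [apply Rabs_pos | auto].
Qed.


Lemma convergent_add f g : convergent f -> convergent g -> convergent (ps_add f g).
Proof.
intros Hf Hg; destruct (convergent_common_radius f g Hf Hg)
  as [r [M [N [Hr [_ [_ [HM HN]]]]]]].
exists r, (M + N); split; auto; intros i j k; unfold ps_add.
pose proof (HM i j k); pose proof (HN i j k).
pose proof (Rabs_triang (f i j k) (g i j k)); pose proof (pow_le r (i + j + k)).
nra.
Qed.

Lemma sumR_bound n u w C : 0 <= w -> (forall a, (a < n)%nat -> Rabs (u a) * w <= C) ->
  Rabs (sumR n u) * w <= INR n * C.
Proof.
intros Hw; induction n as [|n IH]; intros H; cbn [sumR].
- rewrite Rabs_R0; simpl; lra.
- pose proof (IH (fun a Ha => H a ltac:(lia))).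
  pose proof (H n ltac:(lia)).
  pose proof (Rabs_triang (sumR n u) (u n)).
  rewrite S_INR; nra.
Qed.

Lemma ps_mul_coef_bound f g r M N i j k : 0 <= r ->
  (forall i j k, Rabs (f i j k) * r ^ (i + j + k) <= M) ->
  (forall i j k, Rabs (g i j k) * r ^ (i + j + k) <= N) ->
  Rabs (ps_mul f g i j k) * r ^ (i + j + k) <= INR (S i) * (INR (S j) * (INR (S k) * (M * N))).
Proof.
intros Hr Hf Hg; unfold ps_mul.
apply sumR_bound; [apply pow_le; lra | intros a Ha].
apply sumR_bound; [apply pow_le; lra | intros b Hb].
apply sumR_bound; [apply pow_le; lra | intros c Hc].
replace (i + j + k)%nat with ((a + b + c) + ((i - a) + (j - b) + (k - c)))%nat by lia.
rewrite pow_add, Rabs_mult.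
replace (Rabs (f a b c) * Rabs (g (i - a) (j - b) (k - c))%nat *
  (r ^ (a + b + c) * r ^ (i - a + (j - b) + (k - c))))
  with ((Rabs (f a b c) * r ^ (a + b + c)) *
  (Rabs (g (i - a) (j - b) (k - c))%nat * r ^ (i - a + (j - b) + (k - c)))) by ring.
apply Rmult_le_compat; auto; apply Rmult_le_pos; auto using Rabs_pos, pow_le.
Qed.

Lemma INR_S_le_pow2 i : INR (S i) <= 2 ^ i.
Proof.
induction i as [|i IH]; [simpl; lra|].
rewrite S_INR, <- tech_pow_Rmult; pose proof (pow_R1_Rle 2 i ltac:(lra)); lra.
Qed.

(* The factor (i+1)(j+1)(k+1) from the Cauchy product is absorbed by halving the radius. *)
Lemma convergent_mul f g : convergent f -> convergent g -> convergent (ps_mul f g).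
Proof.
intros Hf Hg; destruct (convergent_common_radius f g Hf Hg)
  as [r [M [N [Hr [HM0 [HN0 [HM HN]]]]]]].
exists (r / 2), (M * N); split; [lra|]; intros i j k.
pose proof (ps_mul_coef_bound f g r M N i j k ltac:(lra) HM HN) as Hb.
set (n := (i + j + k)%nat) in *.
assert (Hcount : INR (S i) * (INR (S j) * INR (S k)) <= 2 ^ n).
{ unfold n; rewrite !pow_add, Rmult_assoc.
  pose proof (INR_S_le_pow2 i); pose proof (INR_S_le_pow2 j); pose proof (INR_S_le_pow2 k).
  pose proof (pos_INR (S j)); pose proof (pos_INR (S k)).
  apply Rmult_le_compat; try nra; apply pos_INR. }
assert (Hhalf : (r / 2) ^ n * 2 ^ n = r ^ n).
{ unfold Rdiv; rewrite <- Rpow_mult_distr, Rmult_assoc, Rinv_l, Rmult_1_r by lra; reflexivity. }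
assert (H2n : 0 < 2 ^ n) by (apply pow_lt; lra).
apply (Rmult_le_reg_r (2 ^ n)); auto.
rewrite Rmult_assoc, Hhalf.
pose proof (Rmult_le_pos M N HM0 HN0).
pose proof (pos_INR (S i)); pose proof (pos_INR (S j)); pose proof (pos_INR (S k)).
nra.
Qed.

Lemma convergent_reindex f f' (p : nat -> nat) : convergent f ->
  (forall i, (p i <= 2 * i + 1)%nat) ->
  (forall i j k, f' i j k = 0 \/ f' i j k = f (p i) j k) -> convergent f'.
Proof.
intros [r [M [Hr H]]] Hp Hf.
set (rho := Rmin r 1).
assert (Hrho : 0 < rho) by (apply Rmin_pos; lra).
assert (Hrho1 : rho <= 1) by apply Rmin_r.
assert (Hrhor : rho <= r) by apply Rmin_l.
assert (HM : 0 <= M) by (pose proof (H O O O); pose proof (Rabs_pos (f O O O)); simpl in *; lra).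
exists (rho * rho), (M / rho); split; [nra|]; intros i j k.
destruct (Hf i j k) as [E|E]; rewrite E.
- rewrite Rabs_R0, Rmult_0_l; apply Rmult_le_pos; [lra | apply Rlt_le, Rinv_0_lt_compat; lra].
- apply (Rmult_le_reg_r rho); auto.
  replace (M / rho * rho) with M by (field; lra).
  set (d := (2 * (i + j + k) + 1 - (p i + j + k))%nat).
  assert (Epow : (rho * rho) ^ (i + j + k) * rho = rho ^ (p i + j + k) * rho ^ d).
  { rewrite <- pow_add; replace (p i + j + k + d)%nat with (2 * (i + j + k) + 1)%nat
      by (unfold d; specialize (Hp i); lia).
    rewrite (pow_add rho (2 * _) 1), pow_sqr; simpl; ring. }
  rewrite Rmult_assoc, Epow.
  pose proof (bound_le_radius _ r rho _ _ ltac:(lra) (H (p i) j k)).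
  pose proof (pow_le rho d ltac:(lra)).
  assert (rho ^ d <= 1) by (rewrite <- (pow1 d); apply pow_incr; lra).
  pose proof (Rabs_pos (f (p i) j k)); pose proof (pow_le rho (p i + j + k) ltac:(lra)).
  nra.
Qed.

Definition ps_sub (f g : ps) : ps := ps_add f (ps_opp g).

Declare Scope ps_scope.
Infix "+" := ps_add : ps_scope.
Infix "-" := ps_sub : ps_scope.
Infix "*" := ps_mul : ps_scope.
Local Open Scope ps_scope.

Lemma ps_ring_theory : ring_theory ps_zero ps_one ps_add ps_mul ps_sub ps_opp (@eq ps).
Proof.
constructor; intros;
  auto using ps_mul_1l, ps_mul_comm, ps_mul_assoc, ps_mul_addl;
  apply ps_ext; intros; unfold ps_add, ps_opp, ps_zero; ring.
Qed.

Add Ring ps_ring : ps_ring_theory.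

Definition ps_const (c : R) : ps := ps_scale c ps_one.

Lemma ps_const_halfK : ps_const (/2) * ps_const 2 = ps_one.
Proof.
unfold ps_const at 1; rewrite ps_mul_scalel, ps_mul_1l.
apply ps_ext; intros; unfold ps_const, ps_scale, ps_one; field.
Qed.

Lemma convergent_const c : convergent (ps_const c).
Proof. apply convergent_scale, convergent_one. Qed.

Lemma subst_t_sq_add f g : subst_t_sq (f + g) = subst_t_sq f + subst_t_sq g.
Proof. apply ps_ext; intros; unfold subst_t_sq, ps_add; destruct (Nat.even i); ring. Qed.

Lemma subst_t_sq_opp f : subst_t_sq (ps_opp f) = ps_opp (subst_t_sq f).
Proof. apply ps_ext; intros; unfold subst_t_sq, ps_opp; destruct (Nat.even i); ring. Qed.

Lemma subst_t_sq_sub f g : subst_t_sq (f - g) = subst_t_sq f - subst_t_sq g.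
Proof. unfold ps_sub; rewrite subst_t_sq_add, subst_t_sq_opp; reflexivity. Qed.

Lemma subst_t_sq_scale c f : subst_t_sq (ps_scale c f) = ps_scale c (subst_t_sq f).
Proof. apply ps_ext; intros; unfold subst_t_sq, ps_scale; destruct (Nat.even i); ring. Qed.

Lemma subst_t_sq_zero : subst_t_sq ps_zero = ps_zero.
Proof. apply ps_ext; intros; unfold subst_t_sq, ps_zero; destruct (Nat.even i); ring. Qed.

Lemma subst_t_sq_const c : subst_t_sq (ps_const c) = ps_const c.
Proof.
apply ps_ext; intros [|[|i]] j k; unfold subst_t_sq, ps_const, ps_scale, ps_one; simpl;
  [| ring | destruct (Nat.even i); ring].
destruct j, k; reflexivity.
Qed.

Lemma even_double_div2 i : Nat.even i = true -> i = (2 * Nat.div2 i)%nat.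
Proof.
intros H; rewrite (Nat.div2_odd i) at 1; rewrite <- Nat.negb_even, H; simpl; lia.
Qed.

Lemma deriv_t_subst_t_sq g :
  ps_deriv 0 (subst_t_sq g) = ps_const 2 * (ps_t * subst_t_sq (ps_deriv 0 g)).
Proof.
unfold ps_const; rewrite ps_mul_scalel, ps_mul_1l.
apply ps_ext; intros i j k; unfold ps_scale; rewrite ps_mul_tE; unfold ps_deriv, subst_t_sq.
destruct i as [|i]; [simpl; ring|].
change (Nat.even (S (S i))) with (Nat.even i).
change (Nat.div2 (S (S i))) with (S (Nat.div2 i)).
destruct (Nat.even i) eqn:E; [|ring].
rewrite (even_double_div2 i E) at 1; rewrite !S_INR, mult_INR; simpl; ring.
Qed.

Lemma deriv_x_subst_t_sq v g : v <> 0%nat ->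
  ps_deriv v (subst_t_sq g) = subst_t_sq (ps_deriv v g).
Proof.
intros Hv; apply ps_ext; intros; unfold ps_deriv, subst_t_sq.
destruct v as [|[|v]]; [easy | |]; destruct (Nat.even i); ring.
Qed.

Lemma minor2_subst_t_sq_t g1 g2 v : v <> 0%nat ->
  minor2 (subst_t_sq g1) (subst_t_sq g2) 0 v =
  ps_const 2 * (ps_t * subst_t_sq (minor2 g1 g2 0 v)).
Proof.
intros Hv; unfold minor2.
rewrite !deriv_t_subst_t_sq, !deriv_x_subst_t_sq by exact Hv.
rewrite subst_t_sq_add, subst_t_sq_opp, !subst_t_sq_mul; ring.
Qed.

Lemma minor2_subst_t_sq_x g1 g2 u v : u <> 0%nat -> v <> 0%nat ->
  minor2 (subst_t_sq g1) (subst_t_sq g2) u v = subst_t_sq (minor2 g1 g2 u v).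
Proof.
intros Hu Hv; unfold minor2.
rewrite !deriv_x_subst_t_sq by assumption.
rewrite subst_t_sq_add, subst_t_sq_opp, !subst_t_sq_mul; ring.
Qed.

Definition even_part (f : ps) : ps := fun i j k => f (2 * i)%nat j k.
Definition odd_part (f : ps) : ps := fun i j k => f (S (2 * i)) j k.

Lemma even_double m : Nat.even (2 * m) = true.
Proof. rewrite Nat.even_mul; reflexivity. Qed.

Lemma even_double_S m : Nat.even (S (2 * m)) = false.
Proof. rewrite Nat.even_succ, Nat.odd_mul; reflexivity. Qed.

Lemma parity_decomposition f :
  f = subst_t_sq (even_part f) + ps_t * subst_t_sq (odd_part f).
Proof.
apply ps_ext; intros i j k; unfold ps_add; rewrite ps_mul_tE.
unfold subst_t_sq, even_part, odd_part.
destruct (Nat.Even_or_Odd i) as [[m ->]|[m ->]].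
- rewrite even_double, Nat.div2_double.
  destruct m as [|m]; [simpl; ring|].
  replace (2 * S m)%nat with (S (S (2 * m))) by lia.
  rewrite even_double_S; ring.
- replace (2 * m + 1)%nat with (S (2 * m)) by lia.
  rewrite even_double_S, even_double, Nat.div2_double; ring.
Qed.

Lemma even_part_unique A B : even_part (subst_t_sq A + ps_t * subst_t_sq B) = A.
Proof.
apply ps_ext; intros i j k; unfold even_part, ps_add; rewrite ps_mul_tE; unfold subst_t_sq.
rewrite even_double, Nat.div2_double.
destruct i as [|i]; [simpl; ring|].
replace (2 * S i)%nat with (S (S (2 * i))) by lia.
rewrite even_double_S; ring.
Qed.

Lemma convergent_subst_t_sq f : convergent f -> convergent (subst_t_sq f).
Proof.
intros Hf; apply (convergent_reindex f _ Nat.div2 Hf).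
- intros i; pose proof (Nat.div2_odd i); lia.
- intros i j k; unfold subst_t_sq; destruct (Nat.even i); auto.
Qed.

Lemma convergent_even_part f : convergent f -> convergent (even_part f).
Proof. intros Hf; apply (convergent_reindex f _ (fun i => 2 * i)%nat Hf); auto with arith. Qed.

Lemma convergent_odd_part f : convergent f -> convergent (odd_part f).
Proof. intros Hf; apply (convergent_reindex f _ (fun i => S (2 * i)) Hf); auto; lia. Qed.

Lemma even_part_add f g : even_part (f + g) = even_part f + even_part g.
Proof. reflexivity. Qed.

Lemma even_part_one : even_part ps_one = ps_one.
Proof. apply ps_ext; intros [|i] j k; reflexivity. Qed.

Lemma even_part_mul_subst_t_sq c h :
  even_part (c * subst_t_sq h) = even_part c * h.
Proof.
rewrite (parity_decomposition c) at 1.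
rewrite <- (even_part_unique (even_part c * h) (odd_part c * h)), !subst_t_sq_mul.
f_equal; ring.
Qed.

Lemma even_part_mul_t_subst_t_sq c h :
  even_part (c * (ps_t * subst_t_sq h)) = ps_t * (odd_part c * h).
Proof.
rewrite (parity_decomposition c) at 1.
rewrite <- (even_part_unique (ps_t * (odd_part c * h)) (even_part c * h)), !subst_t_sq_mul,
  subst_t_sq_t.
f_equal; ring.
Qed.

Lemma in_ideal_nil x : in_ideal nil x <-> x = ps_zero.
Proof.
split.
- intros [[|c cs] [Hl [_ ->]]]; [reflexivity | discriminate].
- intros ->; exists nil; repeat constructor.
Qed.

Lemma in_ideal_cons g gs x :
  in_ideal (g :: gs) x <-> exists c, convergent c /\ in_ideal gs (x - c * g).
Proof.
split.
- intros [[|c cs] [Hl [Hc ->]]]; [discriminate|].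
  inversion Hc; subst; exists c; split; auto.
  exists cs; repeat split; auto; simpl; unfold ps_sub; ring.
- intros [c [Hc [cs [Hl [Hcs E]]]]].
  exists (c :: cs); repeat split; simpl; auto.
  rewrite <- E; unfold ps_sub; ring.
Qed.

Lemma in_ideal_zero gs : in_ideal gs ps_zero.
Proof.
induction gs as [|g gs IH]; [apply in_ideal_nil; reflexivity|].
apply in_ideal_cons; exists ps_zero; split; [apply convergent_zero|].
replace (ps_zero - ps_zero * g) with ps_zero by ring; exact IH.
Qed.

Lemma in_ideal_add gs x y : in_ideal gs x -> in_ideal gs y -> in_ideal gs (x + y).
Proof.
revert x y; induction gs as [|g gs IH]; intros x y.
- rewrite !in_ideal_nil; intros -> ->; ring.
- rewrite !in_ideal_cons; intros [c [Hc Hx]] [d [Hd Hy]].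
  exists (c + d); split; [apply convergent_add; auto|].
  replace (x + y - (c + d) * g) with ((x - c * g) + (y - d * g)) by ring; auto.
Qed.

Lemma in_ideal_mul gs c x : convergent c -> in_ideal gs x -> in_ideal gs (c * x).
Proof.
intros Hc; revert x; induction gs as [|g gs IH]; intros x.
- rewrite !in_ideal_nil; intros ->; ring.
- rewrite !in_ideal_cons; intros [d [Hd Hx]].
  exists (c * d); split; [apply convergent_mul; auto|].
  replace (c * x - c * d * g) with (c * (x - d * g)) by ring; auto.
Qed.


Lemma in_ideal_gen gs g : In g gs -> in_ideal gs g.
Proof.
induction gs as [|a gs IH]; [contradiction|]; intros [->|Hg]; apply in_ideal_cons.
- exists ps_one; split; [apply convergent_one|].
  replace (g - ps_one * g) with ps_zero by ring; apply in_ideal_zero.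
- exists ps_zero; split; [apply convergent_zero|].
  replace (g - ps_zero * a) with g by ring; auto.
Qed.

Lemma in_ideal_ind gs (P : ps -> Prop) : P ps_zero ->
  (forall c g x, convergent c -> In g gs -> P x -> P (c * g + x)) ->
  forall x, in_ideal gs x -> P x.
Proof.
intros H0 HS x [cs [_ [Hc ->]]]; revert gs HS.
induction Hc as [|c cs Hc _ IH]; intros [|g gs] HS; simpl; auto.
apply HS; simpl; auto.
apply IH; intros; apply HS; simpl; auto.
Qed.

Lemma in_ideal_mul_subst_t_sq gs hs u x :
  (forall g, In g gs -> in_ideal hs (u * subst_t_sq g)) ->
  in_ideal gs x -> in_ideal hs (u * subst_t_sq x).
Proof.
intros Hgs; revert x; apply in_ideal_ind.
- rewrite subst_t_sq_zero; replace (u * ps_zero) with ps_zero by ring; apply in_ideal_zero.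
- intros c g y Hc Hg Hy; rewrite subst_t_sq_add, subst_t_sq_mul.
  replace (u * (subst_t_sq c * subst_t_sq g + subst_t_sq y))
    with (subst_t_sq c * (u * subst_t_sq g) + u * subst_t_sq y) by ring.
  apply in_ideal_add; auto; apply in_ideal_mul; auto using convergent_subst_t_sq.
Qed.

Lemma in_ideal_t_cons_subst_t_sq gs hs x :
  (forall g, In g gs -> in_ideal hs (subst_t_sq g)) -> in_ideal (ps_t :: gs) x ->
  exists a, convergent a /\ in_ideal hs (subst_t_sq x - ps_t * ps_t * subst_t_sq a).
Proof.
intros Hgs; revert x; apply in_ideal_ind.
- exists ps_zero; split; [apply convergent_zero|].
  rewrite subst_t_sq_zero; replace (ps_zero - ps_t * ps_t * ps_zero) with ps_zero by ring.
  apply in_ideal_zero.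
- intros c g y Hc [<- | Hg] [a [Ha Hy]]; rewrite subst_t_sq_add, subst_t_sq_mul.
  + exists (c + a); split; [apply convergent_add; auto|].
    rewrite subst_t_sq_t, subst_t_sq_add.
    replace (subst_t_sq c * (ps_t * ps_t) + subst_t_sq y - ps_t * ps_t * (subst_t_sq c + subst_t_sq a))
      with (subst_t_sq y - ps_t * ps_t * subst_t_sq a) by ring; exact Hy.
  + exists a; split; auto.
    replace (subst_t_sq c * subst_t_sq g + subst_t_sq y - ps_t * ps_t * subst_t_sq a)
      with (subst_t_sq c * subst_t_sq g + (subst_t_sq y - ps_t * ps_t * subst_t_sq a)) by ring.
    apply in_ideal_add; auto; apply in_ideal_mul; auto using convergent_subst_t_sq.
Qed.

Lemma in_ideal_even_part gs hs x :
  (forall h', In h' hs -> exists h, in_ideal gs h /\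
     (h' = subst_t_sq h \/ h' = ps_t * subst_t_sq h)) ->
  in_ideal hs x -> in_ideal gs (even_part x).
Proof.
intros Hhs; revert x; apply in_ideal_ind; [apply in_ideal_zero|].
intros c h' y Hc Hh' Hy; rewrite even_part_add; apply in_ideal_add; auto.
destruct (Hhs h' Hh') as [h [Hh [-> | ->]]].
- rewrite even_part_mul_subst_t_sq; apply in_ideal_mul; auto using convergent_even_part.
- rewrite even_part_mul_t_subst_t_sq, ps_mul_assoc.
  apply in_ideal_mul; auto using convergent_mul, convergent_t, convergent_odd_part.
Qed.

Definition in_span (es : list ps) (y : ps) : Prop :=
  exists cs, length cs = length es /\ y = real_comb cs es.

Lemma finite_codimE gs : finite_codim gs <-> exists es, Forall convergent es /\
  forall f, convergent f -> exists y, in_span es y /\ in_ideal gs (f - y).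
Proof.
split; intros [es [Hes H]]; exists es; split; auto; intros f Hf.
- destruct (H f Hf) as [cs [Hl Hin]]; exists (real_comb cs es); split; auto.
  exists cs; auto.
- destruct (H f Hf) as [y [[cs [Hl ->]] Hin]]; exists cs; auto.
Qed.

Lemma in_span_app es1 es2 y1 y2 :
  in_span es1 y1 -> in_span es2 y2 -> in_span (es1 ++ es2) (y1 + y2).
Proof.
intros [cs1 [Hl1 ->]] [cs2 [Hl2 ->]]; exists (cs1 ++ cs2).
rewrite !length_app; split; [lia|].
revert es1 Hl1; induction cs1 as [|c cs1 IH]; intros [|e es1] Hl1; try discriminate.
- simpl; ring.
- simpl; rewrite <- IH by auto; ring.
Qed.

Lemma in_span_subst_t_sq es y : in_span es y -> in_span (map subst_t_sq es) (subst_t_sq y).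
Proof.
intros [cs [Hl ->]]; exists cs; rewrite length_map; split; auto.
clear Hl; revert es; induction cs as [|c cs IH]; intros [|e es]; simpl;
  rewrite ?subst_t_sq_add, ?subst_t_sq_scale, ?IH; auto using subst_t_sq_zero.
Qed.

Lemma in_span_mul u es y : in_span es y -> in_span (map (ps_mul u) es) (u * y).
Proof.
intros [cs [Hl ->]]; exists cs; rewrite length_map; split; auto.
clear Hl; revert es; induction cs as [|c cs IH]; intros [|e es]; simpl; try ring.
rewrite <- IH, (ps_mul_comm u e), <- ps_mul_scalel; ring.
Qed.

Lemma Forall_convergent_map (F : ps -> ps) es :
  (forall x, convergent x -> convergent (F x)) ->
  Forall convergent es -> Forall convergent (map F es).
Proof. intros HF Hes; apply Forall_map, (Forall_impl _ HF Hes). Qed.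

Lemma finite_codim_t_subst_t_sq gs :
  finite_codim (ps_t :: gs) -> finite_codim (ps_t :: map subst_t_sq gs).
Proof.
rewrite !finite_codimE; intros [es [Hes HesP]].
exists (map subst_t_sq es); split; [apply Forall_convergent_map; auto using convergent_subst_t_sq|].
intros f Hf.
destruct (HesP (even_part f) (convergent_even_part f Hf)) as [y [Hy Iy]].
exists (subst_t_sq y); split; [apply in_span_subst_t_sq; auto|].
assert (Hgens : forall g, In g (ps_t :: gs) ->
  in_ideal (ps_t :: map subst_t_sq gs) (ps_one * subst_t_sq g)).
{ intros g [<- | Hg]; rewrite ps_mul_1l.
  - rewrite subst_t_sq_t; apply in_ideal_mul; [apply convergent_t|].
    apply in_ideal_gen; left; reflexivity.
  - apply in_ideal_gen; right; apply in_map; exact Hg. }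
rewrite (parity_decomposition f) at 1.
replace (subst_t_sq (even_part f) + ps_t * subst_t_sq (odd_part f) - subst_t_sq y)
  with (ps_one * subst_t_sq (even_part f - y) + subst_t_sq (odd_part f) * ps_t)
  by (rewrite subst_t_sq_sub; ring).
apply in_ideal_add; [apply (in_ideal_mul_subst_t_sq (ps_t :: gs)); auto|].
apply in_ideal_mul; [apply convergent_subst_t_sq, convergent_odd_part; auto|].
apply in_ideal_gen; left; reflexivity.
Qed.

Lemma finite_codim_parity (I J I' : list ps) :
  (forall x, in_ideal I x -> in_ideal I' (ps_t * subst_t_sq x)) ->
  (forall x, in_ideal J x -> exists a, convergent a /\
     in_ideal I' (subst_t_sq x - ps_t * ps_t * subst_t_sq a)) ->
  finite_codim I -> finite_codim J -> finite_codim I'.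
Proof.
intros HI HJ; rewrite !finite_codimE; intros [es [Hes HesP]] [es' [Hes' Hes'P]].
exists (map subst_t_sq es' ++ map (ps_mul (ps_t * ps_t)) (map subst_t_sq es)
        ++ map (ps_mul ps_t) (map subst_t_sq es)).
split.
{ assert (Hphi := Forall_convergent_map _ _ convergent_subst_t_sq Hes).
  assert (Hphi' := Forall_convergent_map _ _ convergent_subst_t_sq Hes').
  apply Forall_app; split; [exact Hphi'|].
  apply Forall_app; split; apply Forall_convergent_map; auto;
    intros; apply convergent_mul; auto using convergent_t, convergent_mul. }
intros f Hf.
destruct (Hes'P (even_part f) (convergent_even_part f Hf)) as [y0 [Hy0 I0]].
destruct (HJ _ I0) as [a [Ha Ia]].
destruct (HesP a Ha) as [ya [Hya Iya]].
destruct (HesP (odd_part f) (convergent_odd_part f Hf)) as [y1 [Hy1 I1]].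
exists (subst_t_sq y0 + (ps_t * ps_t * subst_t_sq ya + ps_t * subst_t_sq y1)).
split.
{ apply in_span_app; [|apply in_span_app]; try apply in_span_mul;
    apply in_span_subst_t_sq; assumption. }
rewrite (parity_decomposition f) at 1.
replace (subst_t_sq (even_part f) + ps_t * subst_t_sq (odd_part f)
         - (subst_t_sq y0 + (ps_t * ps_t * subst_t_sq ya + ps_t * subst_t_sq y1)))
  with ((subst_t_sq (even_part f - y0) - ps_t * ps_t * subst_t_sq a)
        + ps_t * (ps_t * subst_t_sq (a - ya)) + ps_t * subst_t_sq (odd_part f - y1))
  by (rewrite !subst_t_sq_sub; ring).
apply in_ideal_add; [apply in_ideal_add|]; auto.
apply in_ideal_mul; auto using convergent_t.
Qed.

Lemma W_gens_pair g1 g2 : W_gens (g1 :: g2 :: nil) =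
  g1 :: g2 :: minor2 g1 g2 0 1 :: minor2 g1 g2 0 2 :: minor2 g1 g2 1 2 :: nil.
Proof. reflexivity. Qed.

Lemma W_gens_t_subst_t_sq g1 g2 w : In w (W_gens (g1 :: g2 :: nil)) ->
  in_ideal (W_gens (subst_t_sq g1 :: subst_t_sq g2 :: nil)) (ps_t * subst_t_sq w).
Proof.
assert (Hgen : forall c h, convergent c ->
    In h (W_gens (subst_t_sq g1 :: subst_t_sq g2 :: nil)) ->
    in_ideal (W_gens (subst_t_sq g1 :: subst_t_sq g2 :: nil)) (c * h))
  by (intros; apply in_ideal_mul, in_ideal_gen; assumption).
assert (Hhalf : forall v, v <> 0%nat -> ps_t * subst_t_sq (minor2 g1 g2 0 v)
    = ps_const (/2) * minor2 (subst_t_sq g1) (subst_t_sq g2) 0 v)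
  by (intros v Hv; rewrite minor2_subst_t_sq_t by exact Hv; ring [ps_const_halfK]).
rewrite W_gens_pair; intros [<- | [<- | [<- | [<- | [<- | []]]]]];
  rewrite ?Hhalf, <- ?minor2_subst_t_sq_x by discriminate;
  apply Hgen; auto using convergent_t, convergent_const; rewrite W_gens_pair; simpl; auto 6.
Qed.

Lemma W_gens_subst_t_sq g1 g2 h' : In h' (W_gens (subst_t_sq g1 :: subst_t_sq g2 :: nil)) ->
  exists h, in_ideal (W_gens (g1 :: g2 :: nil)) h /\
    (h' = subst_t_sq h \/ h' = ps_t * subst_t_sq h).
Proof.
assert (Hgen : forall h, In h (W_gens (g1 :: g2 :: nil)) -> in_ideal (W_gens (g1 :: g2 :: nil)) h)
  by (intros; apply in_ideal_gen; assumption).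
assert (Htwice : forall v, v <> 0%nat -> minor2 (subst_t_sq g1) (subst_t_sq g2) 0 v
    = ps_t * subst_t_sq (ps_const 2 * minor2 g1 g2 0 v))
  by (intros v Hv; rewrite minor2_subst_t_sq_t, subst_t_sq_mul, subst_t_sq_const by exact Hv;
      ring).
rewrite W_gens_pair; intros [<- | [<- | [<- | [<- | [<- | []]]]]].
- exists g1; split; [apply Hgen|]; rewrite ?W_gens_pair; simpl; auto.
- exists g2; split; [apply Hgen|]; rewrite ?W_gens_pair; simpl; auto.
- exists (ps_const 2 * minor2 g1 g2 0 1); split; [apply in_ideal_mul, Hgen|];
    rewrite ?Htwice, ?W_gens_pair by discriminate; simpl; auto using convergent_const.
- exists (ps_const 2 * minor2 g1 g2 0 2); split; [apply in_ideal_mul, Hgen|];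
    rewrite ?Htwice, ?W_gens_pair by discriminate; simpl; auto using convergent_const.
- exists (minor2 g1 g2 1 2); split; [apply Hgen|];
    rewrite ?minor2_subst_t_sq_x, ?W_gens_pair by discriminate; simpl; auto 6.
Qed.

Lemma finite_codim_W_gens_subst_t_sq g1 g2 :
  finite_codim (W_gens (g1 :: g2 :: nil)) -> finite_codim (ps_t :: g1 :: g2 :: nil) ->
  finite_codim (W_gens (subst_t_sq g1 :: subst_t_sq g2 :: nil)).
Proof.
apply finite_codim_parity.
- intros x; apply in_ideal_mul_subst_t_sq, W_gens_t_subst_t_sq.
- intros x; apply in_ideal_t_cons_subst_t_sq.
  intros g [<- | [<- | []]]; apply in_ideal_gen; rewrite W_gens_pair; simpl; auto.
Qed.

Theorem proposition4p4 (g1 g2 : ps) :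
  convergent g1 -> convergent g2 ->
  vanishes_at_0 g1 -> vanishes_at_0 g2 ->
  curve_alg_isolated_sing (g1 :: g2 :: nil) ->
  finite_codim (ps_t :: g1 :: g2 :: nil) ->
  finite_codim (ps_t :: subst_t_sq g1 :: subst_t_sq g2 :: nil) /\
  curve_alg_isolated_sing (subst_t_sq g1 :: subst_t_sq g2 :: nil).
Proof.
intros Hc1 Hc2 Hv1 Hv2 [_ [_ [Hproper HW]]] HJ.
split; [exact (finite_codim_t_subst_t_sq (g1 :: g2 :: nil) HJ)|].
split; [repeat constructor; apply convergent_subst_t_sq; assumption|].
split; [repeat constructor; assumption|].
split; [|apply finite_codim_W_gens_subst_t_sq; assumption].
intros H1; apply Hproper; rewrite <- even_part_one.
exact (in_ideal_even_part _ _ _ (W_gens_subst_t_sq g1 g2) H1).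
Qed.
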